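(* Let $K\ge 1$ and ${\bf p},{\bf q}\in[0,1]^K$ with $q_k\le p_k$ for all $k$, and let $\Lambda=\{\boldsymbol\lambda\in[0,1]^K: q_k\le\lambda_k\le p_k,\ k=1,\dots,K\}$. Let $\mathcal{V}\subseteq\mathcal{S}_K$ be a closed set (with respect to the Euclidean distance on $\mathbb{R}^K$), and let ${\bf u}\in\mathcal{S}_K$. Then ${\bf u}$ incurs sure loss on $\Lambda$ relative to $\mathcal{V}$ if and only if $({\bf u},{\bf v})$ induces Simpson's paradox in $({\bf p},{\bf q})$ for all ${\bf v}\in\mathcal{V}$.
   Context: $\mathcal{S}_K=\{(v_1,\dots,v_K): \sum_{k=1}^K v_k=1,\ v_k\ge0\}$ is the standard simplex; elements of $\mathcal{S}_K$ are called aggregation rules and $\mathcal{V}$ is the set of desirable aggregation rules. Let $\mathcal{P}_{\mathcal{V}}=\{\boldsymbol\lambda^\top{\bf v}:\boldsymbol\lambda\in\Lambda,\ {\bf v}\in\mathcal{V}\}$. ''${\bf u}$ incurs sure loss on $\Lambda$ relative to $\mathcal{V}$'' means: $\sup_{\boldsymbol\lambda\in\Lambda}\boldsymbol\lambda^\top{\bf u}<\inf\mathcal{P}_{\mathcal{V}}$ or $\inf_{\boldsymbol\lambda\in\Lambda}\boldsymbol\lambda^\top{\bf u}>\sup\mathcal{P}_{\mathcal{V}}$. ''$({\bf u},{\bf v})$ induces Simpson's paradox in $({\bf p},{\bf q})$ for all ${\bf v}\in\mathcal{V}$'' means: ${\bf p}^\top{\bf u}<\inf_{{\bf v}\in\mathcal{V}}{\bf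 q}^\top{\bf v}$ or ${\bf q}^\top{\bf u}>\sup_{{\bf v}\in\mathcal{V}}{\bf p}^\top{\bf v}$. *)

From HB Require Import structures.
From mathcomp Require Import all_boot all_order all_algebra.
From mathcomp Require Import all_classical all_reals all_analysis.
Set Implicit Arguments. Unset Strict Implicit. Unset Printing Implicit Defensive.
Import Order.TTheory GRing.Theory Num.Theory.
Import numFieldNormedType.Exports.
Local Open Scope classical_set_scope.
Local Open Scope ring_scope.

(* Vectors of R^K are row vectors 'rV[R]_K; coordinate k of x is x 0 k. *)
Definition dotp {R : realType} {K : nat} (x y : 'rV[R]_K) : R :=
  \sum_(k < K) x 0 k * y 0 k.

Definition simplex (R : realType) (K : nat) : set 'rV[R]_K :=
  [set v | (forall k, 0 <= v 0 k) /\ \sum_(k < K) v 0 k = 1].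

Definition PV {R : realType} {K : nat} (Lam V : set 'rV[R]_K) : set R :=
  [set dotp l v | l in Lam & v in V].

Definition sure_loss {R : realType} {K : nat} (Lam V : set 'rV[R]_K)
    (u : 'rV[R]_K) : Prop :=
  (ereal_sup [set (dotp l u)%:E | l in Lam] <
     ereal_inf [set x%:E | x in PV Lam V])%E \/
  (ereal_inf [set (dotp l u)%:E | l in Lam] >
     ereal_sup [set x%:E | x in PV Lam V])%E.

Definition simpson_all {R : realType} {K : nat} (p q u : 'rV[R]_K)
    (V : set 'rV[R]_K) : Prop :=
  ((dotp p u)%:E < ereal_inf [set (dotp q v)%:E | v in V])%E \/
  ((dotp q u)%:E > ereal_sup [set (dotp p v)%:E | v in V])%E.
Arguments simplex : clear implicits.

(* For a nonnegative weight vector w the linear form l |-> l^T w is monotone in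
   the coordinatewise order, so over the box Lambda = [q, p] it attains its
   extrema at the corners: sup_Lambda l^T u = p^T u, inf_Lambda l^T u = q^T u,
   inf P_V = inf_V q^T v and sup P_V = sup_V p^T v.  Substituting these four
   values turns the sure-loss condition literally into the Simpson condition. *)
From HB Require Import structures.
From mathcomp Require Import all_boot all_order all_algebra.
From mathcomp Require Import all_classical all_reals all_analysis.
Import Order.TTheory GRing.Theory Num.Theory.
Import numFieldNormedType.Exports.
Local Open Scope classical_set_scope.
Local Open Scope ring_scope.

Lemma ler_dotpl (R : realType) (K : nat) (a b v : 'rV[R]_K) :
  (forall k, a 0 k <= b 0 k) -> (forall k, 0 <= v 0 k) ->
  dotp a v <= dotp b v.
Proof. by move=> le_ab v_ge0; apply: ler_sum => k _; exact: ler_wpM2r. Qed.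

Lemma ereal_sup_attained (R : realType) (S : set \bar R) (x : \bar R) :
  S x -> ubound S x -> ereal_sup S = x.
Proof.
by move=> Sx ubx; apply/le_anti; rewrite ge_ereal_sup //= ereal_sup_ubound.
Qed.

Lemma ereal_inf_attained (R : realType) (S : set \bar R) (x : \bar R) :
  S x -> lbound S x -> ereal_inf S = x.
Proof.
by move=> Sx lbx; apply/le_anti; rewrite ereal_inf_lbound //= le_ereal_inf_tmp.
Qed.

Section CornersOfBox.
Variables (R : realType) (K : nat) (Lam : set 'rV[R]_K) (q p : 'rV[R]_K).
Hypotheses (Lam_q : Lam q) (Lam_p : Lam p).
Hypothesis Lam_ge_q : forall l, Lam l -> forall k, q 0 k <= l 0 k.
Hypothesis Lam_le_p : forall l, Lam l -> forall k, l 0 k <= p 0 k.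

Section NonnegativeWeights.
Variable w : 'rV[R]_K.
Hypothesis w_ge0 : forall k, 0 <= w 0 k.

Lemma ereal_sup_dotpl : ereal_sup [set (dotp l w)%:E | l in Lam] = (dotp p w)%:E.
Proof.
apply: ereal_sup_attained; first by exists p.
by move=> _ [l Lam_l <-]; rewrite lee_fin ler_dotpl //; exact: Lam_le_p.
Qed.

Lemma ereal_inf_dotpl : ereal_inf [set (dotp l w)%:E | l in Lam] = (dotp q w)%:E.
Proof.
apply: ereal_inf_attained; first by exists q.
by move=> _ [l Lam_l <-]; rewrite lee_fin ler_dotpl //; exact: Lam_ge_q.
Qed.

End NonnegativeWeights.

Variable V : set 'rV[R]_K.
Hypothesis V_ge0 : forall v, V v -> forall k, 0 <= v 0 k.

Lemma ereal_inf_PV :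
  ereal_inf [set x%:E | x in PV Lam V] = ereal_inf [set (dotp q v)%:E | v in V].
Proof.
apply/le_anti/andP; split.
  apply: ereal_inf_le_tmp => _ [v Vv <-].
  by exists (dotp q v) => //; exists q => //; exists v.
apply: le_ereal_inf_tmp => _ [_ [l Lam_l [v Vv <-]] <-].
apply: (@le_trans _ _ (dotp q v)%:E); first by apply: ereal_inf_lbound; exists v.
by rewrite lee_fin ler_dotpl //; [exact: Lam_ge_q | exact: V_ge0].
Qed.

Lemma ereal_sup_PV :
  ereal_sup [set x%:E | x in PV Lam V] = ereal_sup [set (dotp p v)%:E | v in V].
Proof.
apply/le_anti/andP; split; last first.
  apply: ereal_sup_le => _ [v Vv <-].
  by exists (dotp p v) => //; exists p => //; exists v.
apply: ge_ereal_sup => _ [_ [l Lam_l [v Vv <-]] <-].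
apply: (@le_trans _ _ (dotp p v)%:E); last by apply: ereal_sup_ubound; exists v.
by rewrite lee_fin ler_dotpl //; [exact: Lam_le_p | exact: V_ge0].
Qed.

Lemma sure_loss_simpson_all (u : 'rV[R]_K) : (forall k, 0 <= u 0 k) ->
  sure_loss Lam V u <-> simpson_all p q u V.
Proof.
move=> u_ge0.
by rewrite /sure_loss /simpson_all ereal_sup_dotpl // ereal_inf_dotpl //
  ereal_inf_PV ereal_sup_PV.
Qed.

End CornersOfBox.

Theorem theorem4p1 (R : realType) (K : nat) (hK : (1 <= K)%N)
    (p q : 'rV[R]_K)
    (hp : forall k, 0 <= p 0 k <= 1) (hq : forall k, 0 <= q 0 k <= 1)
    (hqp : forall k, q 0 k <= p 0 k)
    (Lam : set 'rV[R]_K)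
    (hLam : Lam = [set l : 'rV[R]_K | forall k,
                     0 <= l 0 k <= 1 /\ q 0 k <= l 0 k <= p 0 k])
    (V : set 'rV[R]_K) (hVS : V `<=` simplex R K) (hVc : closed V)
    (u : 'rV[R]_K) (hu : simplex R K u) :
  sure_loss Lam V u <-> simpson_all p q u V.
Proof.
subst Lam; apply: sure_loss_simpson_all.
- by move=> k; rewrite lexx hqp hq.
- by move=> k; rewrite lexx hqp hp.
- by move=> l Lam_l k; case: (Lam_l k) => _ /andP[].
- by move=> l Lam_l k; case: (Lam_l k) => _ /andP[].
- by move=> v /hVS[].
- by case: hu.
Qed.
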